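(* Every orientation of a chordal graph has at most one kernel.
   Context: A graph is chordal if it has no induced cycle of length $4$ or more. An orientation of a graph orients each edge in exactly one direction (not necessarily clique-acyclic). A kernel of a digraph $D=(V,A)$ is a set $S$ of pairwise non-adjacent vertices such that every $u\in V\setminus S$ has an arc $(u,v)\in A$ with $v\in S$. *)

From mathcomp Require Import all_boot.
Set Implicit Arguments. Unset Strict Implicit. Unset Printing Implicit Defensive.

Definition simple_graph (T : finType) (e : rel T) : Prop :=
  symmetric e /\ irreflexive e.

Definition induced_cycle (T : finType) (e : rel T) (c : seq T) : Prop :=
  uniq c /\
  forall x0 : T, forall i j, i < size c -> j < size c ->
    e (nth x0 c i) (nth x0 c j) =
      ((j == (i.+1 %% size c)) || (i == (j.+1 %% size c))).

Definition chordal (T : finType) (e : rel T) : Prop :=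
  forall c : seq T, 4 <= size c -> ~ induced_cycle e c.

Definition orientation (T : finType) (e : rel T) (a : rel T) : Prop :=
  forall x y : T, e x y = (a x y || a y x) /\ ~~ (a x y && a y x).

Definition kernel (T : finType) (a : rel T) (S : {set T}) : Prop :=
  (forall x y, x \in S -> y \in S -> ~~ a x y) /\
  (forall u, u \notin S -> exists2 v, v \in S & a u v).

From mathcomp Require Import all_boot zify.
Set Implicit Arguments. Unset Strict Implicit. Unset Printing Implicit Defensive.

(* Suppose S1 <> S2 and let D be their symmetric difference. A vertex of D
   outside one kernel is absorbed by that kernel, at a vertex which cannot lie
   in the other kernel (it would receive an arc from inside it); so every vertex
   of D has an out-neighbour in D, and D carries a directed cycle, of length at
   least 3 since an orientation has neither loops nor 2-cycles. As both kernels
   are independent, every edge inside D joins S1 to S2. But shortcutting a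
   cycle along chords until it is induced shows that in a chordal graph every
   cycle spans a triangle, and the three edges of a triangle cannot all join
   S1 to S2. *)

Definition closed_walk (T : Type) (r : rel T) (c : seq T) : Prop :=
  forall x0 k, k < size c -> r (nth x0 c k) (nth x0 c (k.+1 %% size c)).

Lemma iter_eventually_periodic (T : finType) (f : T -> T) (x : T) :
  exists k m, [/\ 0 < m, uniq (traject f (iter k f x) m)
                & iter m f (iter k f x) = iter k f x].
Proof.
have /trajectP[k lt_k_order periodic] := looping_order f x.
exists k, (order f x - k); split; first by rewrite subn_gt0.
- have := orbit_uniq f x; rewrite /orbit.
  by rewrite -{1}(subnKC (ltnW lt_k_order)) trajectD cat_uniq => /and3P[].
- by rewrite -iterD subnK ?(ltnW lt_k_order).
Qed.

Lemma closed_walk_traject (T : Type) (r : rel T) (f : T -> T) y m :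
  (forall k, r (iter k f y) (iter k.+1 f y)) -> iter m f y = y ->
  closed_walk r (traject f y m).
Proof.
move=> r_iter periodic x0 k; rewrite size_traject => lt_k_m.
have lt_k1_m : k.+1 %% m < m by rewrite ltn_pmod //; lia.
rewrite !(set_nth_default y) ?size_traject // !nth_traject //.
have [lt_k1|ge_k1] := ltnP k.+1 m; first by rewrite modn_small.
have k1_eq_m : k.+1 = m by lia.
by have := r_iter k; rewrite k1_eq_m modnn periodic.
Qed.

Lemma exists_closed_walk (T : finType) (r : rel T) (D : {set T}) x :
  x \in D -> (forall y, y \in D -> exists2 z, z \in D & r y z) ->
  exists c, [/\ uniq c, 0 < size c, {subset c <= D} & closed_walk r c].
Proof.
move=> xD succ.
pose f y := odflt y [pick z in D | r y z].
have fP y : y \in D -> f y \in D /\ r y (f y).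
  move=> yD; rewrite /f; case: pickP => [z /andP[]|none] //=.
  by have [z zD ryz] := succ y yD; move: (none z); rewrite zD ryz.
have iter_in_D k : iter k f x \in D by elim: k => //= k /fP[].
have [k [m [m_gt0 uniq_c periodic]]] := iter_eventually_periodic f x.
exists (traject f (iter k f x) m); split => //.
- by rewrite size_traject.
- by move=> z /trajectP[i _ ->]; rewrite -iterD.
- apply: closed_walk_traject periodic => i.
  by rewrite -!iterD; apply: (fP _ (iter_in_D _)).2.
Qed.

Section Chords.

Variables (T : finType) (e : rel T).
Hypotheses (e_sym : symmetric e) (e_irr : irreflexive e).

Lemma closed_walk_shortcut (c : seq T) x0 i j :
  i <= j < size c -> closed_walk e c -> e (nth x0 c j) (nth x0 c i) ->
  closed_walk e (drop i (take j.+1 c)).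
Proof.
move=> /andP[le_ij lt_jc] walk chord x k.
have size_c' : size (drop i (take j.+1 c)) = j.+1 - i.
  by rewrite size_drop size_takel.
have nth_c' l : l < j.+1 - i -> nth x (drop i (take j.+1 c)) l = nth x c (i + l).
  by move=> lt_l; rewrite nth_drop nth_take //; lia.
rewrite size_c' => lt_k; rewrite nth_c' //.
have [lt_k1|ge_k1] := ltnP k.+1 (j.+1 - i).
  rewrite modn_small // nth_c' // addnS -[(i + k).+1](@modn_small _ (size c)).
    by apply: walk; lia.
  lia.
have [k1_eq ik_eq_j] : k.+1 = j.+1 - i /\ i + k = j by lia.
rewrite k1_eq modnn nth_c' ?subn_gt0 // addn0 ik_eq_j.
by rewrite !(set_nth_default x0) // (leq_ltn_trans le_ij).
Qed.

Lemma chordless_closed_walk_induced (c : seq T) :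
  uniq c -> closed_walk e c ->
  (forall x0 i j, i < j < size c -> e (nth x0 c i) (nth x0 c j) ->
     (j == i.+1 %% size c) || (i == j.+1 %% size c)) ->
  induced_cycle e c.
Proof.
move=> uniq_c walk chordless; split => // x0 i j lt_ic lt_jc; apply/idP/idP.
- case: (ltngtP i j) => [lt_ij|lt_ji|->] eij.
  + by apply: chordless eij; rewrite lt_ij.
  + by rewrite orbC; apply: (chordless x0); rewrite ?lt_ji ?lt_ic // e_sym.
  + by rewrite e_irr in eij.
- by case/orP => /eqP ->; [|rewrite e_sym]; apply: walk.
Qed.

Lemma closed_walk_induced_subcycle (c : seq T) :
  uniq c -> 3 <= size c -> closed_walk e c ->
  exists c', [/\ 3 <= size c', {subset c' <= c} & induced_cycle e c'].
Proof.
have [n] := ubnP (size c); elim: n c => // n IHn c lt_cn uniq_c c_ge3 walk.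
have x0 : T by case: c c_ge3 {lt_cn uniq_c walk} => [|x].
pose chord i j := [&& i < j, e (nth x0 c i) (nth x0 c j)
                    & ~~ ((j == i.+1 %% size c) || (i == j.+1 %% size c))].
have [/existsP[[i lt_ic] /existsP[[j lt_jc] /= /and3P[lt_ij eij nonconsec]]] | no_chord] :=
  boolP [exists i : 'I_(size c), exists j : 'I_(size c), chord i j].
  have le_ij : i <= j < size c by rewrite ltnW.
  have j_ne_i1 : j != i.+1.
    by apply: contraNneq nonconsec => j_eq; rewrite j_eq modn_small ?eqxx // -j_eq.
  have inner : (0 < i) || (j.+1 < size c).
    apply: contraNT nonconsec; rewrite negb_or -!leqNgt leqn0 => /andP[/eqP-> le_cj].
    by rewrite (_ : j.+1 = size c) ?modnn ?orbT //; lia.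
  have shorter : j.+1 - i < size c by case/orP: inner; lia.
  case: (IHn (drop i (take j.+1 c))) => [||||c' [c'_ge3 sub_c' induced]].
  - rewrite size_drop size_takel; lia.
  - by rewrite drop_uniq ?take_uniq.
  - rewrite size_drop size_takel; lia.
  - by apply: (closed_walk_shortcut (x0 := x0) le_ij walk); rewrite e_sym.
  exists c'; split=> // x /sub_c' /mem_drop; exact: mem_take.
exists c; split=> //; apply: chordless_closed_walk_induced => // x i j.
move=> /andP[lt_ij lt_jc] eij; apply: contraNT no_chord => nonconsec.
apply/existsP; exists (Ordinal (ltn_trans lt_ij lt_jc)).
apply/existsP; exists (Ordinal lt_jc).
by rewrite /chord /= lt_ij nonconsec !(set_nth_default x) ?eij //; lia.
Qed.

End Chords.

Lemma chordal_closed_walk_triangle (T : finType) (e : rel T) (c : seq T) :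
  simple_graph e -> chordal e -> uniq c -> 3 <= size c -> closed_walk e c ->
  exists u v w, [/\ [&& u \in c, v \in c & w \in c], e u v, e v w & e w u].
Proof.
move=> [e_sym e_irr] e_chordal uniq_c c_ge3 walk.
have [c' [c'_ge3 sub_c' induced]] :=
  closed_walk_induced_subcycle e_sym e_irr uniq_c c_ge3 walk.
have [c'_ge4 | ] := leqP 4 (size c'); first by case: (e_chordal c' c'_ge4).
case: c' c'_ge3 sub_c' induced => [|u [|v [|w [|? ?]]]] // _ sub_c' [_ adj].
exists u, v, w; split; first by rewrite !sub_c' ?inE ?eqxx ?orbT.
- exact: (adj u 0 1).
- exact: (adj u 1 2).
- exact: (adj u 2 0).
Qed.

Section Kernels.

Variables (T : finType) (e a : rel T).
Hypothesis a_orients_e : orientation e a.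

Lemma orientation_closed_walk (c : seq T) : closed_walk a c -> closed_walk e c.
Proof.
by move=> walk x0 k lt_kc; rewrite (a_orients_e _ _).1 walk.
Qed.

Lemma orientation_closed_walk_size (c : seq T) :
  closed_walk a c -> 0 < size c -> 3 <= size c.
Proof.
case: c => [|u [|v [|? ?]]] // walk _.
- by have := (a_orients_e u u).2; rewrite andbb (walk u 0).
- move: (walk u 0 erefl) (walk u 1 erefl) => /= auv avu.
  by have := (a_orients_e u v).2; rewrite auv avu.
Qed.

Lemma kernel_edge_free (S : {set T}) x y :
  kernel a S -> x \in S -> y \in S -> ~~ e x y.
Proof.
by move=> [indep _] xS yS; rewrite (a_orients_e x y).1 negb_or !indep.
Qed.

Variables (S1 S2 : {set T}).
Hypotheses (ker1 : kernel a S1) (ker2 : kernel a S2).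

Lemma kernel_symdiff_absorbing x :
  x \in (S1 :\: S2) :|: (S2 :\: S1) ->
  exists2 y, y \in (S1 :\: S2) :|: (S2 :\: S1) & a x y.
Proof.
case: ker1 ker2 => [indep1 absorb1] [indep2 absorb2].
rewrite !inE => /orP[/andP[xS2 xS1] | /andP[xS1 xS2]].
- have [y yS2 axy] := absorb2 x xS2; exists y => //.
  have yS1 : y \notin S1 := contraTN (indep1 x y xS1) axy.
  by rewrite !inE yS1 yS2 orbT.
- have [y yS1 axy] := absorb1 x xS1; exists y => //.
  have yS2 : y \notin S2 := contraTN (indep2 x y xS2) axy.
  by rewrite !inE yS1 yS2.
Qed.

Lemma kernel_symdiff_edge x y :
  x \in (S1 :\: S2) :|: (S2 :\: S1) -> y \in (S1 :\: S2) :|: (S2 :\: S1) ->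
  e x y -> (x \in S1) != (y \in S1).
Proof.
rewrite !inE; case xS1: (x \in S1); case yS1: (y \in S1);
  rewrite ?andbT ?andbF //= => xS2 yS2 exy.
- by move: (kernel_edge_free ker1 xS1 yS1); rewrite exy.
- by move: (kernel_edge_free ker2 xS2 yS2); rewrite exy.
Qed.

End Kernels.

Theorem proposition3 (T : finType) (e a : rel T) :
  simple_graph e -> chordal e -> orientation e a ->
  forall S1 S2 : {set T}, kernel a S1 -> kernel a S2 -> S1 = S2.
Proof.
move=> e_simple e_chordal a_orients_e S1 S2 ker1 ker2.
set D := (S1 :\: S2) :|: (S2 :\: S1).
suff D0 : D = set0.
  apply/setP => x; have /setP/(_ x) := D0.
  by rewrite !inE; case: (x \in S1); case: (x \in S2).
have [//|[x xD]] := set_0Vmem D.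
have [c [uniq_c c_gt0 sub_cD walk]] :=
  exists_closed_walk xD (kernel_symdiff_absorbing ker1 ker2).
have [u [v [w [/and3P[uc vc wc] euv evw ewu]]]] :=
  chordal_closed_walk_triangle e_simple e_chordal uniq_c
    (orientation_closed_walk_size a_orients_e walk c_gt0)
    (orientation_closed_walk a_orients_e walk).
have side := kernel_symdiff_edge a_orients_e ker1 ker2.
have := side u v (sub_cD u uc) (sub_cD v vc) euv.
have := side v w (sub_cD v vc) (sub_cD w wc) evw.
have := side w u (sub_cD w wc) (sub_cD u uc) ewu.
by case: (u \in S1); case: (v \in S1); case: (w \in S1).
Qed.
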